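(* Let $R$ be a local renormalisation operator, built from a permutation-invariant map $r:\mathcal{Q}\to\mathbb{R}$ and extended to $\mathring{\mathcal{N}}\cup\mathring{\mathcal{W}}$ by the formula $R(\tau)=q_F\tau+\sum_{\tau'\in\mathcal{Q}}r(\tau')C_-(\tau',\tau)$. Then for every $\tau\in\mathring{\mathcal{N}}\cup\mathring{\mathcal{W}}$, $$\Delta R\tau=(R\otimes\mathrm{Id})\Delta\tau.$$
   Context: Fix $d\ge1$, $\delta>0$. Trees: $\widehat{\mathcal{T}}_r$ is the smallest set containing generators $\mathbf{1},\mathbf{X}_1,\dots,\mathbf{X}_d,\Xi$ and closed under $(\tau_1,\tau_2,\tau_3)\mapsto\mathcal{I}(\tau_1)\mathcal{I}(\tau_2)\mathcal{I}(\tau_3)$ (formal non-commutative tree product of planted trees). Orders: $|\mathbf{1}|=-2$, $|\mathbf{X}_i|=-1$, $|\Xi|=-3+\delta$, $|\mathcal{I}(\tau_1)\mathcal{I}(\tau_2)\mathcal{I}(\tau_3)|=6+\sum|\tau_k|$, $|\mathcal{I}(\tau)|=|\tau|+2$. $\mathrm{Poly}=\{\mathbf{1},\mathbf{X}_1,..,\mathbf{X}_d\}$, $\mathcal{W}=\{|\tau|<-2\}$, $\mathring{\mathcal{W}}=\mathcal{W}\setminus\{\Xi\}$, $\mathcal{N}=\{-2\le|\tau|\le0\}$, $\mathring{\mathcal{N}}=\mathcal{N}\setminus\mathrm{Poly}$, $\widetilde{\mathcal{N}}=\{\tau\in\mathring{\mathcal{N}}:-1<|\tau|<0\}$, $\mathcal{T}_r=\mathcal{W}\cup\mathring{\mathcal{N}}$.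 Standing assumption: no tree in $\mathcal{W}\cup\mathring{\mathcal{N}}$ has integer order. Truncation convention: a tree product of planted trees with positive total order is $0$. Derivative edges: symbols $\mathcal{I}^+_i(\tau)$ for $\tau\in\widetilde{\mathcal{N}}\cup\{\mathbf{X}_i\}$ with $\mathcal{I}^+_i(\mathbf{X}_j)=0$ ($j\ne i$), $\mathcal{I}^+_i(\tau)=0$ for $\tau\in\mathring{\mathcal{N}}\setminus\widetilde{\mathcal{N}}$; symbols $\mathcal{I}^-_i(\tau)$ for $\tau\in\mathcal{T}_r$ (order $|\tau|+1$), with $\mathcal{I}^-_i(\mathbf{X}_i)=\mathcal{I}^+_i(\mathbf{X}_i)$, $\mathcal{I}^-_i(\mathbf{1})=0$, $\mathcal{I}^-_i(\mathbf{X}_j)=0$ for $j\ne i$. $\mathcal{T}_{l,-}$ is the set of planted trees $\mathcal{I}(\tau)$ ($\tau\in\mathcal{T}_r\cup\mathrm{Poly}$), $\mathcal{I}^-_i(\tau)$ ($\tau\in\mathcal{T}_r$), $\mathcal{I}^+_i(\mathbf{X}_i)$; $\mathcal{T}^{\mathrm{cen}}=\{\mathcal{I}(\tau):\tau\in\mathcal{N}\}\cup\{\mathcal{I}^+_i(\tau):\tau\in\widetilde{\mathcal{N}}\cup\{\mathbf{X}_i\}\}$. $\mathrm{Alg}(S)$ is the free unital non-commutative algebra on planted trees $S$ (forest product $\cdot$, unit $1$ = empty forest). Coproduct $\Delta$, recursively: $\Delta\mathcal{I}(\mathbf{1})=\mathcal{I}(\mathbf{1})\otimes\mathcal{I}(\mathbf{1})$;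 $\Delta\mathcal{I}(\mathbf{X}_i)=\mathcal{I}(\mathbf{1})\otimes\mathcal{I}(\mathbf{X}_i)+\mathcal{I}(\mathbf{X}_i)\otimes\mathcal{I}^+_i(\mathbf{X}_i)$; $\Delta\mathcal{I}^+_i(\mathbf{X}_i)=\mathcal{I}^+_i(\mathbf{X}_i)\otimes\mathcal{I}^+_i(\mathbf{X}_i)$; $\Delta w=w\otimes1$, $\Delta\mathcal{I}(w)=\mathcal{I}(w)\otimes1$ ($w\in\mathcal{W}$); for $\tau\in\mathring{\mathcal{N}}$: $\Delta\mathcal{I}(\tau)=\mathcal{I}(\mathbf{1})\otimes\mathcal{I}(\tau)+\sum_i\mathcal{I}(\mathbf{X}_i)\otimes\mathcal{I}^+_i(\tau)+(\mathcal{I}\otimes\mathrm{Id})\Delta\tau$; for $\tau\in\widetilde{\mathcal{N}}$: $\Delta\mathcal{I}^+_i(\tau)=\mathcal{I}^+_i(\mathbf{X}_i)\otimes\mathcal{I}^+_i(\tau)+(\mathcal{I}^+_i\otimes\mathrm{Id})\Delta\tau$; for $\mathcal{I}(\tau_1)\mathcal{I}(\tau_2)\mathcal{I}(\tau_3)\in\mathring{\mathcal{N}}$: $\Delta(\mathcal{I}(\tau_1)\mathcal{I}(\tau_2)\mathcal{I}(\tau_3))=\prod_k\Delta\mathcal{I}(\tau_k)$ with $\prod_k(\sigma_k\otimes a_k)=\sigma_1\sigma_2\sigma_3\otimes a_1\cdot a_2\cdot a_3$; for $\tau\in\mathcal{T}_r$: $\Delta\mathcal{I}^-_i(\tau)=(\mathcal{I}^-_i\otimes\mathrm{Id})\Delta\tau+\mathcal{I}^+_i(\mathbf{X}_i)\otimes\mathcal{I}^+_i(\tau)$.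 $\Delta$ is linear, and on forests multiplicative: $\Delta1=1\otimes1$, $\Delta(\sigma_1\cdots\sigma_n)=(\Delta\sigma_1)\cdots(\Delta\sigma_n)$ componentwise. $C_-(\bar\tau,\tau)$ for $\bar\tau,\tau\in\mathcal{N}\cup\mathcal{W}$, a forest of planted trees in $\mathcal{T}_{l,-}$ or $0$, defined recursively in $\tau$: $C_-(\mathbf{1},\mathbf{1})=\mathcal{I}(\mathbf{1})$; $C_-(\mathbf{1},\mathbf{X}_j)=\mathcal{I}(\mathbf{X}_j)$; $C_-(\mathbf{X}_i,\mathbf{X}_j)=\mathcal{I}^-_i(\mathbf{X}_j)$; $C_-(\mathbf{1},\Xi)=\mathcal{I}(\Xi)$, $C_-(\mathbf{X}_i,\Xi)=\mathcal{I}^-_i(\Xi)$, $C_-(\Xi,\Xi)=1$; for $\tau=\mathcal{I}(\tau_1)\mathcal{I}(\tau_2)\mathcal{I}(\tau_3)$: $C_-(\mathbf{1},\tau)=\mathcal{I}(\tau)$, $C_-(\mathbf{X}_i,\tau)=\mathcal{I}^-_i(\tau)$, $C_-(\mathcal{I}(\bar\tau_1)\mathcal{I}(\bar\tau_2)\mathcal{I}(\bar\tau_3),\tau)=\prod_kC_-(\bar\tau_k,\tau_k)$ (forest product); all other values are $0$. $\mathcal{Q}$ is the set of trees $\mathcal{I}(\tau_1)\mathcal{I}(\tau_2)\mathcal{I}(\tau_3)\in\mathring{\mathcal{N}}\cup\mathring{\mathcal{W}}$ with no $\tau_k\in\{\mathbf{X}_1,\dots,\mathbf{X}_d\}$ and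 at most one $\tau_k=\mathbf{1}$. $q_F$ maps $\mathcal{I}(\tau_1)\mathcal{I}(\tau_2)\mathcal{I}(\tau_3)$ to the forest $\mathcal{I}(\tau_1)\cdot\mathcal{I}(\tau_2)\cdot\mathcal{I}(\tau_3)$. Given $r:\mathcal{Q}\to\mathbb{R}$ invariant under reordering the factors of tree products, the associated local renormalisation operator is $R(\tau)=q_F\tau+\sum_{\tau'\in\mathcal{Q}}r(\tau')C_-(\tau',\tau)\in\mathrm{Alg}(\mathcal{T}_{l,-})$; $R$ is applied linearly to the left tensor factor of $\Delta\tau$. *)

From Stdlib Require Import Reals List Arith ZArith Permutation Lia.
Import ListNotations.
Open Scope R_scope.
Open Scope bool_scope.

(* Polynomial index i is 0-based: Xv i stands for X_{i+1}, well-formed iff i < d. *)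
Inductive tree : Type :=
| One : tree
| Xv : nat -> tree
| Xi : tree
| Prod : tree -> tree -> tree -> tree.  (* I(t1) I(t2) I(t3), ordered *)

Definition tree_eq_dec (x y : tree) : {x = y} + {x <> y}.
Proof. decide equality; apply Nat.eq_dec. Defined.

Fixpoint wf (d : nat) (t : tree) : Prop :=
  match t with
  | Xv i => (i < d)%nat
  | Prod a b c => wf d a /\ wf d b /\ wf d c
  | _ => True
  end.

Fixpoint ord (delta : R) (t : tree) : R :=
  match t with
  | One => -2
  | Xv _ => -1
  | Xi => -3 + delta
  | Prod a b c => 6 + (ord delta a + ord delta b + ord delta c)
  end.

Definition Rleb (x y : R) : bool := if Rle_dec x y then true else false.
Definition Rltb (x y : R) : bool := if Rlt_dec x y then true else false.

Definition isPoly (t : tree) : bool :=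
  match t with One | Xv _ => true | _ => false end.
Definition isXi (t : tree) : bool := match t with Xi => true | _ => false end.

(** W, N, \mathring N, \widetilde N, \mathring W *)
Definition inW (delta : R) (t : tree) : bool := Rltb (ord delta t) (-2).
Definition inN (delta : R) (t : tree) : bool :=
  Rleb (-2) (ord delta t) && Rleb (ord delta t) 0.
Definition inNr (delta : R) (t : tree) : bool := inN delta t && negb (isPoly t).
Definition inNt (delta : R) (t : tree) : bool :=
  inNr delta t && Rltb (-1) (ord delta t) && Rltb (ord delta t) 0.
Definition inWr (delta : R) (t : tree) : bool := inW delta t && negb (isXi t).

Fixpoint wfb (d : nat) (t : tree) : bool :=
  match t with
  | Xv i => Nat.ltb i d
  | Prod a b c => wfb d a && wfb d b && wfb d c
  | _ => true
  end.
Definition isX (t : tree) : bool := match t with Xv _ => true | _ => false end.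
Definition isOne (t : tree) : bool := match t with One => true | _ => false end.
Definition inQb (d : nat) (delta : R) (t : tree) : bool :=
  match t with
  | Prod a b c =>
      wfb d t
      && (inNr delta t || inWr delta t)
      && negb (isX a) && negb (isX b) && negb (isX c)
      && Nat.leb (Nat.b2n (isOne a) + Nat.b2n (isOne b) + Nat.b2n (isOne c)) 1
  | _ => false
  end.

Inductive planted : Type :=
| PI : tree -> planted
| PIm : nat -> tree -> planted
| PIp : nat -> tree -> planted.

Definition planted_eq_dec (x y : planted) : {x = y} + {x <> y}.
Proof. decide equality; try apply tree_eq_dec; apply Nat.eq_dec. Defined.

(** forests = words in the free non-commutative unital algebra; [] = unit 1 *)
Definition forest := list planted.

Definition forest_eq_dec (x y : forest) : {x = y} + {x <> y} :=
  list_eq_dec planted_eq_dec x y.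

Definition fpair_eq_dec (x y : forest * forest) : {x = y} + {x <> y}.
Proof. decide equality; apply forest_eq_dec. Defined.

(** Smart constructors, None encodes the symbol 0.
    I^+_i(tau) is nonzero only for tau in \widetilde N or tau = X_i. *)
Definition Iplus (delta : R) (i : nat) (t : tree) : option planted :=
  match t with
  | Xv j => if Nat.eq_dec j i then Some (PIp i t) else None
  | _ => if inNt delta t then Some (PIp i t) else None
  end.
Definition Iminus (i : nat) (t : tree) : option planted :=
  match t with
  | One => None
  | Xv j => if Nat.eq_dec j i then Some (PIp i (Xv i)) else None
  | _ => Some (PIm i t)
  end.

Definition Lin (B : Type) := list (R * B).

Definition coef {B} (dec : forall x y : B, {x = y} + {x <> y}) (l : Lin B) (b : B) : R :=
  fold_right (fun cb acc => (if dec (snd cb) b then fst cb else 0) + acc) 0 l.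

Definition lin_eq {B} (dec : forall x y : B, {x = y} + {x <> y}) (l1 l2 : Lin B) : Prop :=
  forall b, coef dec l1 b = coef dec l2 b.

Definition opt_term {B} (c : R) (o : option B) : Lin B :=
  match o with Some b => [(c, b)] | None => [] end.

(** * The coproduct Delta.
    Delta tau lives in span(trees) (x) Alg(T^cen); Delta I(tau) in
    span(planted I(sigma)) (x) Alg; a left entry sigma of [DI] stands for I(sigma). *)

Definition prod3 (delta : R) (l1 l2 l3 : Lin (tree * forest)) : Lin (tree * forest) :=
  flat_map (fun x1 =>
  flat_map (fun x2 =>
  flat_map (fun x3 =>
    let s := Prod (fst (snd x1)) (fst (snd x2)) (fst (snd x3)) in
    if Rltb 0 (ord delta s) then []
    else [(fst x1 * fst x2 * fst x3, (s, snd (snd x1) ++ snd (snd x2) ++ snd (snd x3)))])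
  l3) l2) l1.

Definition DIof (d : nat) (delta : R) (t : tree) (dt : Lin (tree * forest)) : Lin (tree * forest) :=
  match t with
  | One => [(1, (One, [PI One]))]
  | Xv i => [(1, (One, [PI (Xv i)])); (1, (Xv i, [PIp i (Xv i)]))]
  | _ =>
      if inW delta t then [(1, (t, []))]
      else if inNr delta t then
        (1, (One, [PI t]))
        :: flat_map (fun i => match Iplus delta i t with
                              | Some p => [(1, (Xv i, [p]))]
                              | None => [] end) (seq 0 d)
        ++ dt
      else []
  end.

(** Delta t for t in W or in \mathring N (0 outside its domain) *)
Fixpoint Dt (d : nat) (delta : R) (t : tree) : Lin (tree * forest) :=
  match t with
  | Prod a b c =>
      if inW delta t then [(1, (t, []))]
      else if inNr delta t then
        prod3 delta (DIof d delta a (Dt d delta a)) (DIof d delta b (Dt d delta b))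
                    (DIof d delta c (Dt d delta c))
      else []
  | _ => if inW delta t then [(1, (t, []))] else []
  end.

Definition DI (d : nat) (delta : R) (t : tree) : Lin (tree * forest) :=
  DIof d delta t (Dt d delta t).

Definition Dpl (d : nat) (delta : R) (p : planted) : Lin (forest * forest) :=
  match p with
  | PI t => map (fun x => (fst x, ([PI (fst (snd x))], snd (snd x)))) (DI d delta t)
  | PIm i t =>
      flat_map (fun x => opt_term (fst x)
                 (option_map (fun q => ([q], snd (snd x))) (Iminus i (fst (snd x)))))
               (Dt d delta t)
      ++ opt_term 1 (option_map (fun q => ([PIp i (Xv i)], [q])) (Iplus delta i t))
  | PIp i t =>
      match t with
      | Xv j => if Nat.eq_dec j i then [(1, ([p], [p]))] else []
      | _ =>
        (1, ([PIp i (Xv i)], [p]))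
        :: flat_map (fun x => opt_term (fst x)
                 (option_map (fun q => ([q], snd (snd x))) (Iplus delta i (fst (snd x)))))
               (Dt d delta t)
      end
  end.

Definition lmul (l1 l2 : Lin (forest * forest)) : Lin (forest * forest) :=
  flat_map (fun x => map (fun y => (fst x * fst y,
             (fst (snd x) ++ fst (snd y), snd (snd x) ++ snd (snd y)))) l2) l1.

Definition Dforest (d : nat) (delta : R) (f : forest) : Lin (forest * forest) :=
  fold_right (fun p acc => lmul (Dpl d delta p) acc) [(1, ([], []))] f.

Definition Delta_lin (d : nat) (delta : R) (l : Lin forest) : Lin (forest * forest) :=
  flat_map (fun x => map (fun y => (fst x * fst y, snd y)) (Dforest d delta (snd x))) l.

Fixpoint Cm (tb t : tree) {struct t} : option forest :=
  match tb, t with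
  | One, _ => Some [PI t]
  | Xv i, _ => option_map (fun p => [p]) (Iminus i t)
  | Xi, Xi => Some []
  | Prod b1 b2 b3, Prod t1 t2 t3 =>
      match Cm b1 t1, Cm b2 t2, Cm b3 t3 with
      | Some f1, Some f2, Some f3 => Some (f1 ++ f2 ++ f3)
      | _, _, _ => None
      end
  | _, _ => None
  end.

(** A finite list containing (exactly once) every well-formed tb with
    C_-(tb, t) <> 0; see [Cm_cands] and [cands_NoDup] below. *)
Fixpoint cands (d : nat) (t : tree) : list tree :=
  One :: map Xv (seq 0 d) ++
  match t with
  | Xi => [Xi]
  | Prod a b c =>
      flat_map (fun x => flat_map (fun y => map (fun z => Prod x y z) (cands d c))
                                  (cands d b)) (cands d a)
  | _ => []
  end.

Definition qF (t : tree) : forest :=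
  match t with Prod a b c => [PI a; PI b; PI c] | _ => [] end.

Definition Rop (d : nat) (delta : R) (r : tree -> R) (t : tree) : Lin forest :=
  (1, qF t) ::
  flat_map (fun tp => if inQb d delta tp then opt_term (r tp) (Cm tp t) else [])
           (cands d t).

Definition RId (d : nat) (delta : R) (r : tree -> R) (l : Lin (tree * forest))
  : Lin (forest * forest) :=
  flat_map (fun x => map (fun y => (fst x * fst y, (snd y, snd (snd x))))
                         (Rop d delta r (fst (snd x)))) l.

Definition r_perm_inv (d : nat) (delta : R) (r : tree -> R) : Prop :=
  forall a b c a' b' c',
    Permutation [a; b; c] [a'; b'; c'] -> inQb d delta (Prod a b c) = true ->
    r (Prod a b c) = r (Prod a' b' c').

Definition standing (d : nat) (delta : R) : Prop :=
  forall t, wf d t -> (inW delta t || inNr delta t)%bool = true ->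
    t <> Prod One One One -> forall z : Z, ord delta t <> IZR z.

Lemma Cm_cands (d : nat) (t tb : tree) :
  wfb d tb = true -> Cm tb t <> None -> In tb (cands d t).
Proof.
  revert tb; induction t as [| j | | t1 IH1 t2 IH2 t3 IH3]; intros tb Hwf HC;
  destruct tb as [| i | | b1 b2 b3]; simpl in *; try (left; reflexivity);
  try (right; apply in_or_app; left; apply in_map; apply in_seq;
       apply Nat.ltb_lt in Hwf; lia);
  try (exfalso; now apply HC).
  - right; apply in_or_app; right; now left.
  - right; apply in_or_app; right.
    apply andb_prop in Hwf as [Hw Hw3]; apply andb_prop in Hw as [Hw1 Hw2].
    destruct (Cm b1 t1) eqn:E1; [|now exfalso; apply HC].
    destruct (Cm b2 t2) eqn:E2; [|now exfalso; apply HC].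
    destruct (Cm b3 t3) eqn:E3; [|now exfalso; apply HC].
    apply in_flat_map; exists b1; split; [apply IH1; congruence|].
    apply in_flat_map; exists b2; split; [apply IH2; congruence|].
    apply in_map; apply IH3; congruence.
Qed.

Lemma NoDup_prod3 (A B C : list tree) :
  NoDup A -> NoDup B -> NoDup C ->
  NoDup (flat_map (fun x => flat_map (fun y => map (fun z => Prod x y z) C) B) A).
Proof.
  intros HA HB HC.
  assert (HinjC : forall x y, NoDup (map (fun z => Prod x y z) C)).
  { intros x y; apply FinFun.Injective_map_NoDup; [|exact HC].
    intros u v H; now injection H. }
  assert (HBC : forall x, NoDup (flat_map (fun y => map (fun z => Prod x y z) C) B)).
  { intro x; induction HB as [|y B Hy HB IHB]; simpl; [constructor|].
    apply NoDup_app; auto.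
    intros w Hw1 Hw2. apply in_map_iff in Hw1 as [z [<- _]].
    apply in_flat_map in Hw2 as [y' [Hy' Hw2]]. apply in_map_iff in Hw2 as [z' [Heq _]].
    injection Heq; intros; subst; contradiction. }
  induction HA as [|x A Hx HA IHA]; simpl; [constructor|].
  apply NoDup_app; auto.
  intros w Hw1 Hw2.
  apply in_flat_map in Hw1 as [y [_ Hw1]]. apply in_map_iff in Hw1 as [z [<- _]].
  apply in_flat_map in Hw2 as [x' [Hx' Hw2]].
  apply in_flat_map in Hw2 as [y' [_ Hw2]]. apply in_map_iff in Hw2 as [z' [Heq _]].
  injection Heq; intros; subst; contradiction.
Qed.

Lemma cands_NoDup (d : nat) (t : tree) : NoDup (cands d t).
Proof.
  induction t as [| j | | t1 IH1 t2 IH2 t3 IH3]; simpl; constructor;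
  try (rewrite in_app_iff; intros [H|H];
       [apply in_map_iff in H as [? [H _]]; discriminate|
        try (destruct H as [H|H]; [discriminate|contradiction]);
        try contradiction;
        try (apply in_flat_map in H as [? [_ H]]; apply in_flat_map in H as [? [_ H]];
             apply in_map_iff in H as [? [H _]]; discriminate)]);
  try (rewrite ?app_nil_r; apply FinFun.Injective_map_NoDup;
       [intros u v H; now injection H | apply seq_NoDup]).
  - apply NoDup_app.
    + apply FinFun.Injective_map_NoDup; [intros u v H; now injection H | apply seq_NoDup].
    + constructor; [intros []|constructor].
    + intros x H1 [H2|[]]; subst; apply in_map_iff in H1 as [? [H _]]; discriminate.
  - apply NoDup_app.
    + apply FinFun.Injective_map_NoDup; [intros u v H; now injection H | apply seq_NoDup].
    + now apply NoDup_prod3.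
    + intros x H1 H2; apply in_map_iff in H1 as [? [<- _]].
      apply in_flat_map in H2 as [? [_ H]]; apply in_flat_map in H as [? [_ H]];
      apply in_map_iff in H as [? [H _]]; discriminate.
Qed.

From Pilot Require Import Defs.
From Stdlib Require Import Reals List Bool Permutation Lia Lra.
Import ListNotations.
Open Scope R_scope.

(** Two formal linear combinations are equal as soon as they have the same
    pairing with every test function, so both sides are compared through
    pairings.  Apart from [q_F], which is C_-(I(1)I(1)I(1), ·) on tree
    products, R is a combination of the maps C_-(b, ·).  The core fact is
    that these intertwine the coproduct: Δ C_-(b, u) = (C_-(b, ·) ⊗ Id) ΔI(u)
    for every u of order at most 0, and Δ C_-(b, τ) = (C_-(b, ·) ⊗ Id) Δτ
    when b and τ are tree products.  Both follow by induction on u, because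
    Δ is multiplicative on forests and C_- of tree products factorises.
    Summing over b then gives the theorem, once one observes that for every
    tree σ occurring in Δτ, C_-(b, σ) ≠ 0 forces C_-(b, τ) ≠ 0, so that the
    finite lists of candidates b for τ and for σ carry the same nonzero terms. *)

(** * Finite sums and pairings with test functions *)

Fixpoint sumL {A : Type} (L : list A) (f : A -> R) : R :=
  match L with [] => 0 | x :: L' => f x + sumL L' f end.

Lemma sumL_app {A} (L1 L2 : list A) f : sumL (L1 ++ L2) f = sumL L1 f + sumL L2 f.
Proof. induction L1 as [|x L1 IH]; simpl; [ring | rewrite IH; ring]. Qed.

Lemma sumL_ext_in {A} (L : list A) f f' :
  (forall x, In x L -> f x = f' x) -> sumL L f = sumL L f'.
Proof.
  induction L as [|x L IH]; intros H; simpl; [reflexivity|].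
  rewrite H, IH by auto with datatypes; reflexivity.
Qed.

Lemma sumL_ext {A} (L : list A) f f' : (forall x, f x = f' x) -> sumL L f = sumL L f'.
Proof. intros H; apply sumL_ext_in; auto. Qed.

Lemma sumL_ext0 {A} (L : list A) f : (forall x, In x L -> f x = 0) -> sumL L f = 0.
Proof.
  induction L as [|x L IH]; intros H; simpl; [reflexivity|].
  rewrite H, IH by auto with datatypes; ring.
Qed.

Lemma sumL_plus {A} (L : list A) f f' :
  sumL L (fun x => f x + f' x) = sumL L f + sumL L f'.
Proof. induction L as [|x L IH]; simpl; [ring | rewrite IH; ring]. Qed.

Lemma sumL_scal {A} (L : list A) c f : c * sumL L f = sumL L (fun x => c * f x).
Proof. induction L as [|x L IH]; simpl; [ring | rewrite <- IH; ring]. Qed.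

Lemma sumL_swap {A B} (L1 : list A) (L2 : list B) f :
  sumL L1 (fun x => sumL L2 (f x)) = sumL L2 (fun y => sumL L1 (fun x => f x y)).
Proof.
  induction L1 as [|x L1 IH]; simpl.
  - symmetry; apply sumL_ext0; reflexivity.
  - rewrite IH, <- sumL_plus; reflexivity.
Qed.

Lemma sumL_flat_map {A B} (L : list A) (F : A -> list B) f :
  sumL (flat_map F L) f = sumL L (fun x => sumL (F x) f).
Proof. induction L as [|x L IH]; simpl; [reflexivity | rewrite sumL_app, IH; reflexivity]. Qed.

Lemma sumL_map {A B} (L : list A) (F : A -> B) f :
  sumL (map F L) f = sumL L (fun x => f (F x)).
Proof. induction L as [|x L IH]; simpl; [reflexivity | rewrite IH; reflexivity]. Qed.

Lemma sumL_perm {A} (L L' : list A) f : Permutation L L' -> sumL L f = sumL L' f.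
Proof. induction 1; simpl; try ring; congruence. Qed.

Lemma sumL_filter_nonzero {A} (L : list A) f :
  sumL L f = sumL (filter (fun x => if Req_dec_T (f x) 0 then false else true) L) f.
Proof.
  induction L as [|x L IH]; simpl; [reflexivity|].
  destruct (Req_dec_T (f x) 0) as [E|E]; simpl; rewrite <- IH; [rewrite E; ring | reflexivity].
Qed.

Lemma sumL_NoDup_support {A} (L1 L2 : list A) f :
  NoDup L1 -> NoDup L2 -> (forall x, f x <> 0 -> (In x L1 <-> In x L2)) ->
  sumL L1 f = sumL L2 f.
Proof.
  intros N1 N2 H. rewrite (sumL_filter_nonzero L1), (sumL_filter_nonzero L2).
  apply sumL_perm, NoDup_Permutation; try now apply NoDup_filter.
  intros x; rewrite !filter_In.
  destruct (Req_dec_T (f x) 0) as [E|E]; [intuition discriminate | specialize (H x E); tauto].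
Qed.

Lemma sumL_seq_indicator (F : nat -> R) i s n : (s <= i < s + n)%nat ->
  sumL (seq s n) (fun j => if Nat.eq_dec j i then F j else 0) = F i.
Proof.
  revert s; induction n as [|n IH]; intros s Hs; [lia|]. simpl.
  destruct (Nat.eq_dec s i) as [<-|Hne].
  - rewrite sumL_ext0; [ring|]. intros j Hj; apply in_seq in Hj.
    destruct (Nat.eq_dec j s); [lia | reflexivity].
  - rewrite IH by lia; ring.
Qed.

Definition pairing {B : Type} (l : Lin B) (g : B -> R) : R :=
  sumL l (fun x => fst x * g (snd x)).

Lemma pairing_cons {B} (x : R * B) l g : pairing (x :: l) g = fst x * g (snd x) + pairing l g.
Proof. reflexivity. Qed.

Lemma pairing_app {B} (l1 l2 : Lin B) g : pairing (l1 ++ l2) g = pairing l1 g + pairing l2 g.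
Proof. apply sumL_app. Qed.

Lemma pairing_ext_in {B} (l : Lin B) g g' :
  (forall x, In x l -> g (snd x) = g' (snd x)) -> pairing l g = pairing l g'.
Proof. intros H; apply sumL_ext_in; intros x Hx; rewrite H; auto. Qed.

Lemma pairing_ext {B} (l : Lin B) g g' : (forall b, g b = g' b) -> pairing l g = pairing l g'.
Proof. intros H; apply pairing_ext_in; auto. Qed.

Lemma pairing_ext0 {B} (l : Lin B) g : (forall b, g b = 0) -> pairing l g = 0.
Proof. intros H; apply sumL_ext0; intros x _; rewrite H; ring. Qed.

Lemma pairing_plus {B} (l : Lin B) g g' :
  pairing l (fun b => g b + g' b) = pairing l g + pairing l g'.
Proof. unfold pairing; rewrite <- sumL_plus; apply sumL_ext; intros; ring. Qed.

Lemma pairing_scal {B} (l : Lin B) c g : c * pairing l g = pairing l (fun b => c * g b).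
Proof. unfold pairing; rewrite sumL_scal; apply sumL_ext; intros; ring. Qed.

Lemma pairing_flat_map {A B} (L : list A) (F : A -> Lin B) g :
  pairing (flat_map F L) g = sumL L (fun x => pairing (F x) g).
Proof. apply sumL_flat_map. Qed.

Lemma sumL_pairing_swap {A B} (L : list A) (l : Lin B) F :
  sumL L (fun x => pairing l (F x)) = pairing l (fun b => sumL L (fun x => F x b)).
Proof. unfold pairing; rewrite sumL_swap; apply sumL_ext; intros; symmetry; apply sumL_scal. Qed.

Lemma lin_eq_of_pairing {B} dec (l1 l2 : Lin B) :
  (forall g, pairing l1 g = pairing l2 g) -> lin_eq dec l1 l2.
Proof.
  intros H b.
  assert (E : forall l, coef dec l b = pairing l (fun x => if dec x b then 1 else 0)).
  { induction l as [|[c x] l IH]; unfold pairing in *; simpl; [reflexivity|].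
    rewrite IH; destruct (dec x b); ring. }
  rewrite !E; apply H.
Qed.

Lemma pairing_lmul l1 l2 g :
  pairing (lmul l1 l2) g =
  pairing l1 (fun a => pairing l2 (fun b => g (fst a ++ fst b, snd a ++ snd b))).
Proof.
  unfold lmul, pairing. rewrite sumL_flat_map. apply sumL_ext; intros [c [u v]].
  rewrite sumL_map, sumL_scal. apply sumL_ext; intros [c' [u' v']]; simpl; ring.
Qed.

Lemma pairing_Dforest_app d delta f1 f2 g :
  pairing (Dforest d delta (f1 ++ f2)) g =
  pairing (Dforest d delta f1) (fun a => pairing (Dforest d delta f2)
    (fun b => g (fst a ++ fst b, snd a ++ snd b))).
Proof.
  revert g; induction f1 as [|p f1 IH]; intros g.
  - unfold pairing at 2; simpl. rewrite Rmult_1_l, Rplus_0_r.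
    apply pairing_ext; intros [u v]; reflexivity.
  - simpl app. change (Dforest d delta (?p :: ?f)) with (lmul (Dpl d delta p) (Dforest d delta f)).
    rewrite !pairing_lmul. apply pairing_ext; intros a.
    rewrite IH. apply pairing_ext; intros b. apply pairing_ext; intros c.
    simpl; rewrite !app_assoc; reflexivity.
Qed.

Lemma pairing_Dforest1 d delta p g :
  pairing (Dforest d delta [p]) g = pairing (Dpl d delta p) g.
Proof.
  change (Dforest d delta [p]) with (lmul (Dpl d delta p) [(1, ([], []))]).
  rewrite pairing_lmul. apply pairing_ext; intros [u v].
  unfold pairing; simpl; rewrite !app_nil_r, Rmult_1_l, Rplus_0_r; reflexivity.
Qed.

Lemma pairing_Delta_lin d delta l g :
  pairing (Delta_lin d delta l) g = pairing l (fun f => pairing (Dforest d delta f) g).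
Proof.
  unfold Delta_lin, pairing. rewrite sumL_flat_map. apply sumL_ext; intros x.
  rewrite sumL_map, sumL_scal. apply sumL_ext; intros y; simpl; ring.
Qed.

Lemma pairing_RId d delta r l g :
  pairing (RId d delta r l) g =
  pairing l (fun a => pairing (Rop d delta r (fst a)) (fun f => g (f, snd a))).
Proof.
  unfold RId, pairing. rewrite sumL_flat_map. apply sumL_ext; intros x.
  rewrite sumL_map, sumL_scal. apply sumL_ext; intros y; simpl; ring.
Qed.

Lemma pairing_prod3 delta l1 l2 l3 g :
  pairing (prod3 delta l1 l2 l3) g =
  pairing l1 (fun a1 => pairing l2 (fun a2 => pairing l3 (fun a3 =>
    let s := Prod (fst a1) (fst a2) (fst a3) in
    if Rltb 0 (ord delta s) then 0 else g (s, snd a1 ++ snd a2 ++ snd a3)))).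
Proof.
  unfold prod3, pairing. rewrite sumL_flat_map. apply sumL_ext; intros x1.
  rewrite sumL_flat_map, sumL_scal. apply sumL_ext; intros x2.
  rewrite sumL_flat_map, sumL_scal, sumL_scal. apply sumL_ext; intros x3.
  (* [unfold forest] makes the implicit types in the atoms [g _] agree, as [ring] requires. *)
  simpl. destruct (Rltb _ _); simpl; unfold forest; ring.
Qed.

Lemma in_prod3 delta l1 l2 l3 x :
  In x (prod3 delta l1 l2 l3) ->
  exists x1 x2 x3, In x1 l1 /\ In x2 l2 /\ In x3 l3 /\
    fst (snd x) = Prod (fst (snd x1)) (fst (snd x2)) (fst (snd x3)).
Proof.
  unfold prod3; intros H.
  apply in_flat_map in H as [x1 [H1 H]].
  apply in_flat_map in H as [x2 [H2 H]].
  apply in_flat_map in H as [x3 [H3 H]].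
  exists x1, x2, x3; repeat split; auto.
  destruct (Rltb _ _); [contradiction|].
  destruct H as [<-|[]]; reflexivity.
Qed.

(** * Orders and the trees of the coproduct *)

Lemma Rltb_true x y : Rltb x y = true <-> x < y.
Proof. unfold Rltb; destruct (Rlt_dec x y); intuition discriminate. Qed.

Lemma Rltb_false x y : Rltb x y = false <-> ~ x < y.
Proof. unfold Rltb; destruct (Rlt_dec x y); intuition discriminate. Qed.

Lemma Rleb_true x y : Rleb x y = true <-> x <= y.
Proof. unfold Rleb; destruct (Rle_dec x y); intuition discriminate. Qed.

Lemma ord_gt_m3 delta t : 0 < delta -> -3 < ord delta t.
Proof. intros Hd; induction t; simpl; lra. Qed.

Lemma ord_Prod_args_lt delta u1 u2 u3 c : 0 < delta -> ord delta (Prod u1 u2 u3) <= c ->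
  ord delta u1 < c /\ ord delta u2 < c /\ ord delta u3 < c.
Proof.
  intros Hd Hu; simpl in Hu.
  pose proof (ord_gt_m3 delta u1 Hd); pose proof (ord_gt_m3 delta u2 Hd);
    pose proof (ord_gt_m3 delta u3 Hd).
  repeat split; lra.
Qed.

Lemma inN_ord delta t : inN delta t = true -> -2 <= ord delta t <= 0.
Proof. unfold inN; rewrite andb_true_iff, !Rleb_true; tauto. Qed.

Lemma inNr_ord delta t : inNr delta t = true -> -2 <= ord delta t.
Proof. unfold inNr; rewrite andb_true_iff; intros [H _]; apply inN_ord, H. Qed.

Lemma inNt_ord delta t : inNt delta t = true -> -1 < ord delta t.
Proof. unfold inNt; rewrite !andb_true_iff, Rltb_true; tauto. Qed.

Lemma inNt_not_poly delta t : inNt delta t = true -> isPoly t = false.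
Proof.
  unfold inNt, inNr; destruct (isPoly t); [|reflexivity].
  rewrite andb_false_r; discriminate.
Qed.

Lemma inNr_of delta u :
  ~ ord delta u < -2 -> ord delta u <= 0 -> isPoly u = false -> inNr delta u = true.
Proof.
  intros H1 H2 H3. unfold inNr, inN. rewrite H3, andb_true_r, andb_true_iff, !Rleb_true; lra.
Qed.

Lemma Dt_W d delta u : ord delta u < -2 -> Dt d delta u = [(1, (u, []))].
Proof.
  intros H; assert (HW : inW delta u = true) by now apply Rltb_true.
  destruct u; simpl; rewrite HW; reflexivity.
Qed.

Lemma DI_W d delta u : ord delta u < -2 -> DI d delta u = [(1, (u, []))].
Proof.
  intros H; assert (HW : inW delta u = true) by now apply Rltb_true.
  destruct u; simpl in H; try lra; unfold DI, DIof; rewrite HW; reflexivity.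
Qed.

Lemma Iplus_W delta i u : ord delta u < -2 -> Iplus delta i u = None.
Proof.
  intros H; destruct u; simpl in H; try lra; unfold Iplus;
  destruct (inNt delta _) eqn:E; auto; apply inNt_ord in E; simpl in E; lra.
Qed.

(* Any relation with the closure properties below relates every tree of Δτ
   and of ΔI(τ) to τ.  It is instantiated with the comparison of orders and
   with the inclusion of the supports of C_-(·, s) and C_-(·, t). *)
Section Dominance.
Variables (d : nat) (delta : R) (P : tree -> tree -> Prop).
Hypothesis P_refl : forall t, P t t.
Hypothesis P_One_Xv : forall i, P One (Xv i).
Hypothesis P_One_Nr : forall t, inNr delta t = true -> P One t.
Hypothesis P_Xv_Nt : forall i t, inNt delta t = true -> P (Xv i) t.
Hypothesis P_Prod : forall a b c a' b' c',
  P a a' -> P b b' -> P c c' -> P (Prod a b c) (Prod a' b' c').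

Lemma DI_dominated_of_Dt t :
  (forall x, In x (Dt d delta t) -> P (fst (snd x)) t) ->
  forall x, In x (DI d delta t) -> P (fst (snd x)) t.
Proof.
  intros HDt x; unfold DI, DIof.
  destruct t as [| i | | a b c]; cbv beta iota;
    [intros [<-|[]]; apply P_refl | intros [<-|[<-|[]]]; [apply P_One_Xv | apply P_refl] | |].
  all: destruct (inW delta _); [intros [<-|[]]; apply P_refl|].
  all: destruct (inNr delta _) eqn:ENr; [|intros []].
  all: intros [<-|Hx]; [now apply P_One_Nr|].
  all: apply in_app_or in Hx as [Hx|Hx]; [|now apply HDt].
  all: apply in_flat_map in Hx as [j [_ Hx]]; unfold Iplus in Hx; cbv beta iota in Hx.
  all: destruct (inNt delta _) eqn:ENt; [|contradiction].
  all: destruct Hx as [<-|[]]; now apply P_Xv_Nt.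
Qed.

Lemma Dt_dominated t : forall x, In x (Dt d delta t) -> P (fst (snd x)) t.
Proof.
  induction t as [| i | | a IHa b IHb c IHc]; intros x; simpl Dt.
  1-3: destruct (inW delta _); [intros [<-|[]]; apply P_refl | intros []].
  destruct (inW delta _); [intros [<-|[]]; apply P_refl|].
  destruct (inNr delta _); [|intros []].
  intros Hx; apply in_prod3 in Hx as (x1 & x2 & x3 & H1 & H2 & H3 & ->).
  apply P_Prod; eapply DI_dominated_of_Dt; eauto.
Qed.

Lemma DI_dominated t : forall x, In x (DI d delta t) -> P (fst (snd x)) t.
Proof. apply DI_dominated_of_Dt, Dt_dominated. Qed.

End Dominance.

Lemma ord_DI_le d delta t x : In x (DI d delta t) -> ord delta (fst (snd x)) <= ord delta t.
Proof.
  apply (DI_dominated d delta (fun s t => ord delta s <= ord delta t)); simpl.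
  - intros; lra.
  - intros; lra.
  - intros u Hu; now apply inNr_ord.
  - intros i u Hu; apply inNt_ord in Hu; lra.
  - intros; lra.
Qed.

Lemma Cm_One u : Cm One u = Some [Defs.PI u].
Proof. destruct u; reflexivity. Qed.

Lemma Cm_Xv i u : Cm (Xv i) u = option_map (fun p => [p]) (Iminus i u).
Proof. destruct u; reflexivity. Qed.

Definition Cm_supp_incl (s t : tree) : Prop := forall b, Cm b s <> None -> Cm b t <> None.

Lemma Cm_supp_incl_One t : Cm_supp_incl One t.
Proof.
  intros b H E; destruct b; simpl in H; try now apply H.
  rewrite Cm_One in E; discriminate.
Qed.

Lemma Cm_supp_incl_Xv i t : isPoly t = false -> Cm_supp_incl (Xv i) t.
Proof.
  intros Ht b H E; destruct b as [| j | | ]; simpl in H; try now apply H.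
  - rewrite Cm_One in E; discriminate.
  - destruct t; discriminate.
Qed.

Lemma Cm_supp_incl_Prod a b c a' b' c' :
  Cm_supp_incl a a' -> Cm_supp_incl b b' -> Cm_supp_incl c c' ->
  Cm_supp_incl (Prod a b c) (Prod a' b' c').
Proof.
  intros Ha Hb Hc bb H E; destruct bb as [| j | | b1 b2 b3]; simpl in H, E; try congruence.
  specialize (Ha b1); specialize (Hb b2); specialize (Hc b3).
  destruct (Cm b1 a), (Cm b2 b), (Cm b3 c); try congruence.
  destruct (Cm b1 a'), (Cm b2 b'), (Cm b3 c'); intuition congruence.
Qed.

Lemma Cm_supp_incl_Delta d delta t :
  (forall x, In x (Dt d delta t) -> Cm_supp_incl (fst (snd x)) t) /\
  (forall x, In x (DI d delta t) -> Cm_supp_incl (fst (snd x)) t).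
Proof.
  split; [apply (Dt_dominated d delta Cm_supp_incl)
         | apply (DI_dominated d delta Cm_supp_incl)];
    auto using Cm_supp_incl_One, Cm_supp_incl_Prod.
  all: try (intros t' b H; exact H).
  all: intros i u Hu; apply Cm_supp_incl_Xv, (inNt_not_poly delta), Hu.
Qed.

Lemma Dt_Prod_Nr d delta u1 u2 u3 :
  ~ ord delta (Prod u1 u2 u3) < -2 -> ord delta (Prod u1 u2 u3) <= 0 ->
  Dt d delta (Prod u1 u2 u3) = prod3 delta (DI d delta u1) (DI d delta u2) (DI d delta u3).
Proof.
  intros HW HN.
  assert (EW : inW delta (Prod u1 u2 u3) = false) by now apply Rltb_false.
  assert (EN : inNr delta (Prod u1 u2 u3) = true) by now apply inNr_of.
  simpl Dt; rewrite EW, EN; reflexivity.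
Qed.

Lemma pairing_Dt_Prod d delta u1 u2 u3 h : 0 < delta ->
  ord delta (Prod u1 u2 u3) <= 0 ->
  pairing (Dt d delta (Prod u1 u2 u3)) h =
  pairing (DI d delta u1) (fun a1 => pairing (DI d delta u2) (fun a2 =>
    pairing (DI d delta u3) (fun a3 =>
      h (Prod (fst a1) (fst a2) (fst a3), snd a1 ++ snd a2 ++ snd a3)))).
Proof.
  intros Hd Hu.
  destruct (Rlt_dec (ord delta (Prod u1 u2 u3)) (-2)) as [HW|HW].
  - destruct (ord_Prod_args_lt delta u1 u2 u3 (-2) Hd (Rlt_le _ _ HW)) as (W1 & W2 & W3).
    rewrite Dt_W, !DI_W by assumption. unfold pairing; simpl; unfold forest; ring.
  - rewrite Dt_Prod_Nr, pairing_prod3 by assumption.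
    apply pairing_ext_in; intros x1 H1; apply pairing_ext_in; intros x2 H2;
      apply pairing_ext_in; intros x3 H3.
    apply ord_DI_le in H1, H2, H3. simpl in Hu.
    assert (Htrunc : Rltb 0 (ord delta (Prod (fst (snd x1)) (fst (snd x2)) (fst (snd x3))))
                     = false) by (apply Rltb_false; simpl; lra).
    cbv zeta; rewrite Htrunc; reflexivity.
Qed.

Lemma pairing_Iplus_terms delta u L h :
  pairing (flat_map (fun i => match Iplus delta i u with
                              | Some p => [(1, (Xv i, [p]))] | None => [] end) L) h =
  sumL L (fun j => match Iplus delta j u with Some p => h (Xv j, [p]) | None => 0 end).
Proof.
  rewrite pairing_flat_map; apply sumL_ext; intros j.
  destruct (Iplus delta j u); unfold pairing; simpl; ring.
Qed.

Lemma pairing_DI_nonpoly d delta u h :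
  isPoly u = false -> ord delta u <= 0 ->
  pairing (DI d delta u) h = pairing (Dt d delta u) h +
    (if inW delta u then 0 else
     h (One, [Defs.PI u]) + sumL (seq 0 d) (fun j =>
       match Iplus delta j u with Some p => h (Xv j, [p]) | None => 0 end)).
Proof.
  intros Hp Hu.
  destruct (inW delta u) eqn:EW.
  - rewrite Dt_W, DI_W by now apply Rltb_true. ring.
  - assert (EN : inNr delta u = true) by (apply inNr_of; auto; now apply Rltb_false).
    unfold DI, DIof.
    destruct u; try discriminate; cbv beta iota; rewrite EW, EN;
      rewrite pairing_cons, pairing_app, pairing_Iplus_terms; simpl; ring.
Qed.

(** * C_- intertwines the coproduct *)

Definition Cm_eval (f : forest -> R) (b t : tree) : R :=
  match Cm b t with Some h => f h | None => 0 end.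

(* The transposes of Δ and of C_-(b, ·) ⊗ Id, acting on test functions. *)
Definition Delta_dual d delta (g : forest * forest -> R) (h : forest) : R :=
  pairing (Dforest d delta h) g.

Definition CmId_dual (b : tree) (g : forest * forest -> R) (a : tree * forest) : R :=
  Cm_eval (fun h => g (h, snd a)) b (fst a).

Lemma Cm_eval_ext f f' b t : (forall h, f h = f' h) -> Cm_eval f b t = Cm_eval f' b t.
Proof. intros H; unfold Cm_eval; destruct (Cm b t); auto. Qed.

Lemma Cm_eval_Prod f b1 b2 b3 u1 u2 u3 :
  Cm_eval f (Prod b1 b2 b3) (Prod u1 u2 u3) =
  Cm_eval (fun h1 => Cm_eval (fun h2 => Cm_eval (fun h3 => f (h1 ++ h2 ++ h3)) b3 u3) b2 u2) b1 u1.
Proof. unfold Cm_eval; simpl; destruct (Cm b1 u1), (Cm b2 u2), (Cm b3 u3); reflexivity. Qed.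

Lemma CmId_dual_pairing {B} (l : Lin B) b F a :
  CmId_dual b (fun c => pairing l (F c)) a = pairing l (fun x => CmId_dual b (fun c => F c x) a).
Proof.
  unfold CmId_dual, Cm_eval; destruct (Cm b (fst a)); [reflexivity|].
  symmetry; apply pairing_ext0; reflexivity.
Qed.

Lemma Delta_dual_app3 d delta g h1 h2 h3 :
  Delta_dual d delta g (h1 ++ h2 ++ h3) =
  Delta_dual d delta (fun c1 => Delta_dual d delta (fun c2 => Delta_dual d delta (fun c3 =>
    g (fst c1 ++ fst c2 ++ fst c3, snd c1 ++ snd c2 ++ snd c3)) h3) h2) h1.
Proof.
  unfold Delta_dual; rewrite pairing_Dforest_app; apply pairing_ext; intros c1.
  rewrite pairing_Dforest_app; apply pairing_ext; intros c2.
  apply pairing_ext; intros c3; simpl; reflexivity.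
Qed.

Lemma pairing_DI_Cm_None d delta b u g :
  Cm b u = None -> pairing (DI d delta u) (CmId_dual b g) = 0.
Proof.
  intros Hbu; apply sumL_ext0; intros x Hx.
  unfold CmId_dual, Cm_eval; destruct (Cm b (fst (snd x))) eqn:E; [|ring].
  exfalso; apply (proj2 (Cm_supp_incl_Delta d delta u) x Hx b); congruence.
Qed.

Lemma Delta_Cm_One d delta u g :
  Cm_eval (Delta_dual d delta g) One u = pairing (DI d delta u) (CmId_dual One g).
Proof.
  unfold Cm_eval, Delta_dual; rewrite Cm_One, pairing_Dforest1; cbn [Dpl].
  unfold pairing; rewrite sumL_map; apply sumL_ext; intros x.
  unfold CmId_dual, Cm_eval; rewrite Cm_One; reflexivity.
Qed.

Lemma pairing_Dpl_PIm d delta i u g :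
  pairing (Dpl d delta (PIm i u)) g =
  pairing (Dt d delta u) (CmId_dual (Xv i) g)
  + match Iplus delta i u with Some q => g ([PIp i (Xv i)], [q]) | None => 0 end.
Proof.
  cbn [Dpl]; rewrite pairing_app, pairing_flat_map; f_equal.
  - apply sumL_ext; intros x; unfold CmId_dual, Cm_eval; rewrite Cm_Xv.
    destruct (Iminus i (fst (snd x))); unfold pairing; simpl; unfold forest; ring.
  - destruct (Iplus delta i u); unfold pairing; simpl; unfold forest; ring.
Qed.

Lemma Delta_Cm_Xv_Xv d delta i g :
  Cm_eval (Delta_dual d delta g) (Xv i) (Xv i) = pairing (DI d delta (Xv i)) (CmId_dual (Xv i) g).
Proof.
  unfold Cm_eval, CmId_dual, Delta_dual; cbn [Cm Iminus].
  destruct (Nat.eq_dec i i) as [_|]; [|congruence]; cbn [option_map].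
  rewrite pairing_Dforest1; simpl.
  destruct (Nat.eq_dec i i) as [_|]; [|congruence].
  unfold pairing, Cm_eval; simpl.
  destruct (Nat.eq_dec i i) as [_|]; [|congruence]; simpl; unfold forest; ring.
Qed.

Lemma Delta_Cm_Xv d delta i u g : (i < d)%nat -> isPoly u = false -> ord delta u <= 0 ->
  Cm_eval (Delta_dual d delta g) (Xv i) u = pairing (DI d delta u) (CmId_dual (Xv i) g).
Proof.
  intros Hi Hp Hu.
  assert (E : Cm (Xv i) u = Some [PIm i u]) by (destruct u; easy).
  unfold Cm_eval at 1, Delta_dual.
  rewrite E, pairing_Dforest1, pairing_Dpl_PIm, pairing_DI_nonpoly by assumption; f_equal.
  destruct (inW delta u) eqn:EW.
  - rewrite Iplus_W; [reflexivity|]. now apply Rltb_true.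
  - rewrite (sumL_ext _ _ (fun j => if Nat.eq_dec j i then
        match Iplus delta j u with Some p => g ([PIp i (Xv i)], [p]) | None => 0 end else 0)).
    + rewrite sumL_seq_indicator by lia. unfold CmId_dual, Cm_eval; simpl; ring.
    + intros j; unfold CmId_dual, Cm_eval; cbn [Cm Iminus option_map fst snd].
      destruct (Nat.eq_dec j i), (Iplus delta j u); reflexivity.
Qed.

Lemma Delta_Cm_Prod d delta b1 b2 b3 u1 u2 u3 g :
  0 < delta -> ord delta (Prod u1 u2 u3) <= 0 ->
  (forall g, Cm_eval (Delta_dual d delta g) b1 u1 = pairing (DI d delta u1) (CmId_dual b1 g)) ->
  (forall g, Cm_eval (Delta_dual d delta g) b2 u2 = pairing (DI d delta u2) (CmId_dual b2 g)) ->
  (forall g, Cm_eval (Delta_dual d delta g) b3 u3 = pairing (DI d delta u3) (CmId_dual b3 g)) ->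
  Cm_eval (Delta_dual d delta g) (Prod b1 b2 b3) (Prod u1 u2 u3) =
  pairing (Dt d delta (Prod u1 u2 u3)) (CmId_dual (Prod b1 b2 b3) g).
Proof.
  intros Hd Hu IH1 IH2 IH3.
  set (G := fun c1 c2 c3 : forest * forest =>
              g (fst c1 ++ fst c2 ++ fst c3, snd c1 ++ snd c2 ++ snd c3)).
  transitivity (Cm_eval (Delta_dual d delta (fun c1 =>
                  Cm_eval (Delta_dual d delta (fun c2 =>
                    Cm_eval (Delta_dual d delta (G c1 c2)) b3 u3)) b2 u2)) b1 u1).
  { rewrite Cm_eval_Prod; unfold Cm_eval.
    destruct (Cm b1 u1) as [h1|]; [|reflexivity].
    destruct (Cm b2 u2) as [h2|]; [|symmetry; apply pairing_ext0; reflexivity].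
    destruct (Cm b3 u3) as [h3|]; [apply Delta_dual_app3|].
    symmetry; apply pairing_ext0; intros; apply pairing_ext0; reflexivity. }
  rewrite IH1, pairing_Dt_Prod by assumption; apply pairing_ext; intros a1.
  transitivity (CmId_dual b1 (fun c1 => pairing (DI d delta u2) (fun a2 =>
                  CmId_dual b2 (fun c2 => pairing (DI d delta u3) (CmId_dual b3 (G c1 c2)))
                    a2)) a1).
  { apply Cm_eval_ext; intros h1; rewrite IH2.
    apply pairing_ext; intros a2; apply Cm_eval_ext; intros h2; apply IH3. }
  rewrite CmId_dual_pairing; apply pairing_ext; intros a2.
  transitivity (CmId_dual b1 (fun c1 => pairing (DI d delta u3) (fun a3 =>
                  CmId_dual b2 (fun c2 => CmId_dual b3 (G c1 c2) a3) a2)) a1).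
  { apply Cm_eval_ext; intros h1; apply CmId_dual_pairing. }
  rewrite CmId_dual_pairing; apply pairing_ext; intros a3.
  unfold CmId_dual, Cm_eval, G; simpl.
  destruct (Cm b1 (fst a1)), (Cm b2 (fst a2)), (Cm b3 (fst a3)); reflexivity.
Qed.

Lemma Delta_Cm_DI d delta u : 0 < delta -> delta < 1 -> ord delta u <= 0 ->
  forall b, wfb d b = true -> forall g,
  Cm_eval (Delta_dual d delta g) b u = pairing (DI d delta u) (CmId_dual b g).
Proof.
  intros Hd Hd1.
  assert (HXi : ord delta Xi < -2) by (simpl; lra).
  induction u as [| j | | u1 IH1 u2 IH2 u3 IH3]; intros Hu b Hb g;
    (match goal with |- Cm_eval _ _ ?u = _ => destruct (Cm b u) as [?|] eqn:Ebu end;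
     [| unfold Cm_eval; rewrite Ebu, pairing_DI_Cm_None by exact Ebu; reflexivity]).
  all: destruct b as [| i | | b1 b2 b3]; [apply Delta_Cm_One | | | ]; simpl in Ebu;
         try discriminate.
  - destruct (Nat.eq_dec j i) as [<-|]; [apply Delta_Cm_Xv_Xv | discriminate].
  - apply Delta_Cm_Xv; auto; now apply Nat.ltb_lt.
  - unfold Cm_eval at 1, Delta_dual; cbn [Cm].
    rewrite DI_W by exact HXi; unfold pairing, CmId_dual, Cm_eval; simpl; unfold forest; ring.
  - apply Delta_Cm_Xv; auto; now apply Nat.ltb_lt.
  - simpl in Hb; apply andb_prop in Hb as [Hb Hb3]; apply andb_prop in Hb as [Hb1 Hb2].
    destruct (ord_Prod_args_lt delta u1 u2 u3 0 Hd Hu) as (N1 & N2 & N3).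
    rewrite pairing_DI_nonpoly by easy.
    rewrite (Delta_Cm_Prod d delta b1 b2 b3 u1 u2 u3 g Hd Hu);
      [| intros; apply IH1; auto; lra | intros; apply IH2; auto; lra
       | intros; apply IH3; auto; lra].
    destruct (inW delta _); [ring|].
    rewrite sumL_ext0; [unfold CmId_dual, Cm_eval; simpl; ring|].
    intros j _; destruct (Iplus delta j _); reflexivity.
Qed.

Lemma Delta_Cm_Dt_Prod d delta b1 b2 b3 u1 u2 u3 g : 0 < delta -> delta < 1 ->
  ord delta (Prod u1 u2 u3) <= 0 -> wfb d (Prod b1 b2 b3) = true ->
  Cm_eval (Delta_dual d delta g) (Prod b1 b2 b3) (Prod u1 u2 u3) =
  pairing (Dt d delta (Prod u1 u2 u3)) (CmId_dual (Prod b1 b2 b3) g).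
Proof.
  intros Hd Hd1 Hu Hb; simpl in Hb; rewrite !andb_true_iff in Hb.
  destruct (ord_Prod_args_lt delta u1 u2 u3 0 Hd Hu) as (N1 & N2 & N3).
  apply Delta_Cm_Prod; auto; intros; apply Delta_Cm_DI; tauto || lra.
Qed.

(** * The renormalisation operator *)

Definition Rweight d delta (r : tree -> R) (tp : tree) : R :=
  if inQb d delta tp then r tp else 0.

Lemma Rweight_nonzero d delta r tp : Rweight d delta r tp <> 0 ->
  wfb d tp = true /\ exists b1 b2 b3, tp = Prod b1 b2 b3.
Proof.
  unfold Rweight; destruct (inQb d delta tp) eqn:EQ; [intros _|congruence].
  destruct tp as [| | | b1 b2 b3]; try discriminate.
  split; [|eauto]. unfold inQb in EQ; rewrite !andb_true_iff in EQ; tauto.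
Qed.

Lemma pairing_Rop_Prod d delta r u1 u2 u3 f :
  pairing (Rop d delta r (Prod u1 u2 u3)) f =
  Cm_eval f (Prod One One One) (Prod u1 u2 u3) +
  sumL (cands d (Prod u1 u2 u3))
    (fun tp => Rweight d delta r tp * Cm_eval f tp (Prod u1 u2 u3)).
Proof.
  unfold Rop; rewrite pairing_cons, pairing_flat_map; f_equal.
  - unfold Cm_eval; simpl; rewrite !Cm_One; simpl; ring.
  - apply sumL_ext; intros tp; unfold Rweight, Cm_eval.
    destruct (inQb d delta tp); [destruct (Cm tp _)|]; unfold pairing; simpl; ring.
Qed.

Lemma sumL_cands_change d t s (h : tree -> R) :
  (forall tp, h tp <> 0 -> wfb d tp = true /\ Cm tp t <> None /\ Cm tp s <> None) ->
  sumL (cands d t) h = sumL (cands d s) h.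
Proof.
  intros H; apply sumL_NoDup_support; try apply cands_NoDup.
  intros tp Hne; destruct (H tp Hne) as (Hw & Ht & Hs); split; intros _; now apply Cm_cands.
Qed.

Lemma Dt_Prod_trees d delta u1 u2 u3 x :
  In x (Dt d delta (Prod u1 u2 u3)) -> exists s1 s2 s3, fst (snd x) = Prod s1 s2 s3.
Proof.
  simpl Dt; destruct (inW delta (Prod u1 u2 u3)).
  - intros [<-|[]]; simpl; eauto.
  - destruct (inNr delta (Prod u1 u2 u3)); [|intros []].
    intros Hx; apply in_prod3 in Hx as (x1 & x2 & x3 & _ & _ & _ & ->); eauto.
Qed.

Lemma pairing_Rop_Dt_Prod d delta r u1 u2 u3 g a :
  In a (Dt d delta (Prod u1 u2 u3)) ->
  pairing (Rop d delta r (fst (snd a))) (fun f => g (f, snd (snd a))) =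
  CmId_dual (Prod One One One) g (snd a) +
  sumL (cands d (Prod u1 u2 u3)) (fun tp => Rweight d delta r tp * CmId_dual tp g (snd a)).
Proof.
  intros Ha; destruct a as [c [s F]].
  destruct (Dt_Prod_trees d delta u1 u2 u3 _ Ha) as (s1 & s2 & s3 & Es); simpl in Es; subst s.
  cbn [fst snd]; rewrite pairing_Rop_Prod; f_equal.
  symmetry; apply sumL_cands_change; intros tp Hne.
  assert (Hr : Rweight d delta r tp <> 0) by (intros E; apply Hne; rewrite E; ring).
  assert (Hs : Cm tp (Prod s1 s2 s3) <> None)
    by (intros E; apply Hne; unfold CmId_dual, Cm_eval; cbn [fst snd]; rewrite E; ring).
  split; [apply (Rweight_nonzero d delta r tp Hr)|].
  split; [|exact Hs].
  exact (proj1 (Cm_supp_incl_Delta d delta (Prod u1 u2 u3)) _ Ha tp Hs).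
Qed.

Lemma Delta_Rop_Prod d delta r u1 u2 u3 : 0 < delta -> delta < 1 ->
  ord delta (Prod u1 u2 u3) <= 0 ->
  lin_eq fpair_eq_dec (Delta_lin d delta (Rop d delta r (Prod u1 u2 u3)))
                      (RId d delta r (Dt d delta (Prod u1 u2 u3))).
Proof.
  intros Hd Hd1 Hu; apply lin_eq_of_pairing; intros g.
  rewrite pairing_Delta_lin, pairing_RId.
  change (fun f => pairing (Dforest d delta f) g) with (Delta_dual d delta g).
  rewrite pairing_Rop_Prod, Delta_Cm_Dt_Prod by auto.
  rewrite (sumL_ext _ _ (fun tp => pairing (Dt d delta (Prod u1 u2 u3))
                                     (fun a => Rweight d delta r tp * CmId_dual tp g a))).
  2: { intros tp; destruct (Req_dec (Rweight d delta r tp) 0) as [E|E].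
       - rewrite E, Rmult_0_l; symmetry; apply pairing_ext0; intros; ring.
       - destruct (Rweight_nonzero d delta r tp E) as [Hw (b1 & b2 & b3 & ->)].
         rewrite Delta_Cm_Dt_Prod, pairing_scal by auto; reflexivity. }
  rewrite sumL_pairing_swap, <- pairing_plus.
  apply pairing_ext_in; intros a Ha; symmetry; exact (pairing_Rop_Dt_Prod d delta r _ _ _ g a Ha).
Qed.

Lemma Nr_Wr_Prod delta t : delta < 1 -> (inNr delta t || inWr delta t)%bool = true ->
  (exists u1 u2 u3, t = Prod u1 u2 u3) /\ ord delta t <= 0.
Proof.
  intros Hd1 Ht.
  apply orb_true_iff in Ht as [H|H]; unfold inNr, inWr in H; apply andb_prop in H as [H1 H2].
  - apply inN_ord in H1.
    destruct t as [| i | | u1 u2 u3]; try discriminate; simpl in H1; [lra |].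
    split; eauto; simpl; lra.
  - apply Rltb_true in H1.
    destruct t as [| i | | u1 u2 u3]; try discriminate; simpl in H1; try lra.
    split; eauto; simpl; lra.
Qed.

Theorem lemma8p7 (d : nat) (delta : R) (r : tree -> R) :
  (1 <= d)%nat -> 0 < delta -> delta < 1 ->
  standing d delta ->
  r_perm_inv d delta r ->
  forall t : tree, wf d t ->
    (inNr delta t || inWr delta t)%bool = true ->
    lin_eq fpair_eq_dec (Delta_lin d delta (Rop d delta r t))
                        (RId d delta r (Dt d delta t)).
Proof.
  intros _ Hd Hd1 _ _ t _ Ht.
  destruct (Nr_Wr_Prod delta t Hd1 Ht) as [(u1 & u2 & u3 & ->) Hu].
  now apply Delta_Rop_Prod.
Qed.
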